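(* Let $C>0$ be a constant such that for every sufficiently large positive integer $q$ there exists a subset $S\subseteq\mathbb{Z}/q\mathbb{Z}$ with $|S|>q/\exp(C\sqrt{\log q})$ containing no three-term arithmetic progression modulo $q$ (no $a,b,c\in S$ with $a\not\equiv b$ and $a+b\equiv 2c\pmod q$). Then for every sequence $x_1,x_2,x_3,\dots$ of numbers in $(0,1]$ converging to $0$, there are infinitely many positive integers $n$ such that $$\frac{r(x_{n+1})}{r(x_n)}\ <\ \exp\left(-\frac{1}{2C^2}\left(\log^2 x_{n+1}-\log^2 x_n\right)\right).$$
   Context: For a positive integer $n$ and $T\subseteq \mathbb{Z}/n\mathbb{Z}$, $\mu_n(T)=\#\{(a,b,c)\in T^3 : a+b\equiv 2c \pmod n\}/n^2$ (ordered triples, trivial ones included). For $0<\rho\le1$, $r_q(\rho)=\min\{\mu_q(S): S\subseteq \mathbb{Z}/q\mathbb{Z},\ |S|\ge\rho q\}$, and $r(\rho)=\liminf_{q\to\infty,\ q\text{ prime}} r_q(\rho)$. *)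

From HB Require Import structures.
From mathcomp Require Import all_boot all_order all_algebra.
From mathcomp Require Import all_classical all_reals all_analysis.
Set Implicit Arguments. Unset Strict Implicit. Unset Printing Implicit Defensive.
Import Order.TTheory GRing.Theory Num.Theory.
Local Open Scope ring_scope.
Local Open Scope classical_set_scope.

(* Z/nZ is modelled by 'I_n (residues 0..n-1), with congruences taken mod n. *)

Definition ap3 (n : nat) (a b c : 'I_n) : bool :=
  ((a + b) %% n == (2 * c) %% n)%N.

Definition mu3 {R : realType} (n : nat) (T : {set 'I_n}) : R :=
  (#|[set t : 'I_n * 'I_n * 'I_n |
        [&& t.1.1 \in T, t.1.2 \in T, t.2 \in T & ap3 t.1.1 t.1.2 t.2]]|)%:R
  / ((n ^ 2)%N)%:R.
Arguments mu3 {R} n T.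

(* r_q(rho) = min { mu_q(S) : S subset of Z/qZ, |S| >= rho q }.
   The min is taken starting from mu_q(Z/qZ), which is itself a candidate
   whenever rho <= 1 (the only range used). *)
Definition rq {R : realType} (q : nat) (rho : R) : R :=
  \big[Order.min/mu3 q [set: 'I_q]]_(S : {set 'I_q} | rho * q%:R <= (#|S|)%:R)
     mu3 q S.

(* r(rho) = liminf_{q -> oo, q prime} r_q(rho)
          = sup_N inf { r_q(rho) : q prime, q >= N } *)
Definition rlim {R : realType} (rho : R) : R :=
  sup (range (fun N : nat => inf [set rq q rho | q in [set q : nat | prime q /\ (N <= q)%N]])).

Definition no3AP (q : nat) (S : {set 'I_q}) : Prop :=
  forall a b c : 'I_q, a \in S -> b \in S -> c \in S -> ap3 a b c -> a = b.

From HB Require Import structures.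
From mathcomp Require Import all_boot all_order all_algebra.
From mathcomp Require Import all_classical all_reals all_analysis.
From mathcomp Require Import zify ring lra.
Import numFieldNormedType.Exports.
Import Order.TTheory GRing.Theory Num.Theory.

(* If the inequality failed for every n >= N, then r(x_n) exp(log^2 x_n / 2C^2)
   would be nondecreasing from N on, so r(x_n) >= c exp(-log^2 x_n / 2C^2) for
   some c > 0.  Conversely, a 3AP-free S in Z/M blows up to a set T in Z/q:
   cut [0, q/2) into blocks of length 2w and keep the first half of every block
   whose index lies in S.  No sum wraps around modulo q, so a + b = 2c in T
   forces a and b into the same block; hence mu_q(T) <= M w^2 / q^2 <= 1/M while
   |T| >= |S| q / 8M.  Taking S from the hypothesis with
   M ~ exp(log^2(8 rho) / C^2) gives r(rho) <= 2 exp(-log^2(8 rho) / C^2), which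
   is eventually below the lower bound since x_n -> 0. *)

Set Implicit Arguments.
Unset Strict Implicit.
Unset Printing Implicit Defensive.

Lemma eq_quotient_small_rem (d x y r s : nat) :
  r < d -> s < d -> x * d + r = y * d + s -> x = y.
Proof.
move=> rd sd /(congr1 (divn^~ d)).
by rewrite !divnMDl ?divn_small ?addn0 //; lia.
Qed.

Section Blowup.

Variables (n w q : nat).
Hypothesis hq : 4 * n * w <= q.

Lemma blowup_elt_subproof (p : 'I_n * 'I_w) : p.1 * (2 * w) + p.2 < q.
Proof. case: p => [[s hs] [i hi]] /=; nia. Qed.

Definition blowup_elt (p : 'I_n * 'I_w) : 'I_q := Ordinal (blowup_elt_subproof p).

Lemma blowup_elt_div p : blowup_elt p %/ (2 * w) = p.1.
Proof. case: p => [s [i hi]] /=; rewrite divnMDl ?divn_small ?addn0 //; lia. Qed.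

Lemma blowup_elt_mod p : blowup_elt p %% (2 * w) = p.2.
Proof. case: p => [s [i hi]] /=; rewrite modnMDl modn_small //; lia. Qed.

Lemma blowup_elt_inj : injective blowup_elt.
Proof.
move=> [s i] [s' i'] e; congr pair; apply: val_inj.
- by have := blowup_elt_div (s, i); rewrite e blowup_elt_div => /= ->.
- by have := blowup_elt_mod (s, i); rewrite e blowup_elt_mod => /= ->.
Qed.

Lemma blowup_elt_lt_half p : 2 * blowup_elt p < q.
Proof. case: p => [[s hs] [i hi]] /=; nia. Qed.

Definition blowup (S : {set 'I_n}) : {set 'I_q} :=
  blowup_elt @: finset.setX S [set: 'I_w].

Lemma card_blowup S : #|blowup S| = #|S| * w.
Proof. by rewrite card_imset ?cardsX ?cardsT ?card_ord //; apply: blowup_elt_inj. Qed.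

Lemma ap3_blowup_elt p1 p2 p3 : ap3 (blowup_elt p1) (blowup_elt p2) (blowup_elt p3) ->
  blowup_elt p1 + blowup_elt p2 = 2 * blowup_elt p3.
Proof.
have := blowup_elt_lt_half p1; have := blowup_elt_lt_half p2.
have := blowup_elt_lt_half p3; rewrite /ap3 => h3 h2 h1 /eqP.
by rewrite !modn_small //; lia.
Qed.

Lemma ap3_blowup_elt_block S s1 s2 s3 (i1 i2 i3 : 'I_w) :
  no3AP S -> s1 \in S -> s2 \in S -> s3 \in S ->
  ap3 (blowup_elt (s1, i1)) (blowup_elt (s2, i2)) (blowup_elt (s3, i3)) -> s1 = s2.
Proof.
move=> hS S1 S2 S3 /ap3_blowup_elt /=.
have -> : s1 * (2 * w) + i1 + (s2 * (2 * w) + i2) = (s1 + s2) * (2 * w) + (i1 + i2) by ring.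
have -> : 2 * (s3 * (2 * w) + i3) = (2 * s3) * (2 * w) + 2 * i3 by ring.
have [lt1 lt2 lt3] := And3 (ltn_ord i1) (ltn_ord i2) (ltn_ord i3).
move=> /eq_quotient_small_rem e; apply: (hS _ _ s3) => //.
by rewrite /ap3 e //; lia.
Qed.

Lemma card_ap3_blowup S : no3AP S ->
  #|[set t : 'I_q * 'I_q * 'I_q | [&& t.1.1 \in blowup S, t.1.2 \in blowup S,
                                     t.2 \in blowup S & ap3 t.1.1 t.1.2 t.2]]|
    <= n * w * w.
Proof.
move=> hS; set A := [set t | _].
have fst_inj : {in A &, injective (fun t : 'I_q * 'I_q * 'I_q => t.1)}.
  move=> [[a b] c] [[a' b'] c'] At At' /= [ea eb]; move: At At'.
  rewrite {}ea {}eb !inE /= => /and4P[/imsetP[p1 _ ->] /imsetP[p2 _ ->]].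
  move=> /imsetP[p3 _ ->] /ap3_blowup_elt e /and4P[_ _ /imsetP[p3' _ ->]].
  move=> /ap3_blowup_elt; rewrite e => /eqP; rewrite eqn_pmul2l // => /eqP/ord_inj.
  by move=> ->.
pose pairs (t : 'I_n * 'I_w * 'I_w) := (blowup_elt (t.1.1, t.1.2), blowup_elt (t.1.1, t.2)).
rewrite -(card_in_imset fst_inj).
apply: (@leq_trans #|pairs @: [set: 'I_n * 'I_w * 'I_w]|).
  apply/subset_leq_card/fintype.subsetP => ab /imsetP[[[a b] c]].
  rewrite inE /= => /and4P[/imsetP[[s i] /finset.setXP[sS _] ->]].
  move=> /imsetP[[s' j] /finset.setXP[sS' _] ->] /imsetP[[s3 k] /finset.setXP[s3S _] ->] ap ->.
  have ss' := ap3_blowup_elt_block hS sS sS' s3S ap.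
  by apply/imsetP; exists (s, i, j); rewrite ?finset.in_setT // /pairs /= ss'.
by apply: leq_trans (leq_imset_card _ _) _; rewrite cardsT !card_prod !card_ord.
Qed.

End Blowup.

Local Open Scope ring_scope.

Section Density.

Variable R : realType.

Lemma mu3E n (T : {set 'I_n}) :
  mu3 n T = #|[set t : 'I_n * 'I_n * 'I_n |
                [&& t.1.1 \in T, t.1.2 \in T, t.2 \in T & ap3 t.1.1 t.1.2 t.2]]|%:R
            / (n ^ 2)%:R :> R.
Proof.
rewrite /mu3; congr (_%:R / _); apply: eq_card => t.
by rewrite finset.inE; apply/idP/idP => [/set_mem|/mem_set].
Qed.

Lemma mu3_blowup_le n w q (hq : (4 * n * w <= q)%N) (S : {set 'I_n}) :
  (0 < n)%N -> (0 < w)%N -> no3AP S -> mu3 q (blowup hq S) <= n%:R^-1 :> R.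
Proof.
move=> n0 w0 hS; have q0 : (0 < q)%N by nia.
rewrite mu3E ler_pdivrMr ?ltr0n ?expn_gt0 ?q0 // mulrC ler_pdivlMr ?ltr0n //.
rewrite -natrM ler_nat (leq_trans (leq_mul (card_ap3_blowup hq hS) (leqnn n))) //.
nia.
Qed.

Lemma rq_ge0 q (rho : R) : 0 <= rq q rho.
Proof. by apply: le_bigmin => [|S _]; rewrite /mu3 divr_ge0. Qed.

Lemma rq_le_inv n (S : {set 'I_n}) (rho : R) q :
  (0 < n)%N -> no3AP S -> 0 <= rho -> rho * (8 * n)%:R <= #|S|%:R ->
  (8 * n <= q)%N -> rq q rho <= n%:R^-1.
Proof.
move=> n0 hS rho0 hSrho hq; pose w := (q %/ (4 * n))%N.
have w0 : (0 < w)%N by rewrite divn_gt0; nia.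
have hw : (4 * n * w <= q)%N by rewrite mulnC leq_trunc_div.
have q_lt : (q <= 8 * n * w)%N.
  by have := @ltn_ceil q (4 * n) ltac:(nia); rewrite -/w; nia.
apply: le_trans (mu3_blowup_le hw n0 w0 hS); apply: bigmin_le_cond.
rewrite card_blowup natrM.
apply: (@le_trans _ _ (rho * (8 * n * w)%:R)); first by rewrite ler_wpM2l ?ler_nat.
by rewrite [(8 * n * w)%N]mulnC natrM mulrCA mulrC ler_wpM2r.
Qed.

Lemma rlim_ge0 (rho : R) : 0 <= rlim rho.
Proof.
rewrite /rlim; set E := (X in sup X).
have [hE|] := pselect (has_sup E); last by move/sup_out ->.
apply: le_trans (sup_upper_bound hE (ex_intro2 _ _ 0%N I erefl)).
apply: lb_le_inf => [|_ [q _ <-]]; last exact: rq_ge0.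
by have [p _ pp] := prime_above 0; exists (rq p rho), p.
Qed.

Lemma rlim_le_eventually (rho b : R) Q0 :
  (forall q, (Q0 <= q)%N -> prime q -> rq q rho <= b) -> rlim rho <= b.
Proof.
move=> hb; apply: ge_sup => [|_ [N _ <-]]; first by eexists; exists 0%N.
have [p Np pp] := prime_above (maxn N Q0).
have [NQ Q0p] : (N <= p /\ Q0 <= p)%N by split; apply: ltnW; lia.
apply: le_trans (hb p Q0p pp); apply: ge_inf; last by exists p.
by exists 0 => _ [q _ <-]; apply: rq_ge0.
Qed.

Lemma rlim_le_inv n (S : {set 'I_n}) (rho : R) :
  (0 < n)%N -> no3AP S -> 0 <= rho -> rho * (8 * n)%:R <= #|S|%:R ->
  rlim rho <= n%:R^-1.
Proof.
move=> n0 hS rho0 hSrho; apply: (@rlim_le_eventually _ _ (8 * n)) => q hq _.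
exact: rq_le_inv n0 hS rho0 hSrho hq.
Qed.

Lemma expR_sqr_gap (D b c K v : R) : 0 < D -> 0 < b -> 0 < c -> ln 2 - ln c <= K ->
  4 * b + 1 <= v -> 8 * D * K + 1 <= v ->
  2 * expR (- (v ^+ 2 / D)) < c * expR (- ((v + b) ^+ 2 / (2 * D))).
Proof.
move=> D0 b0 c0 cK vb vK.
have gap : 2 * D * (ln 2 - ln c) < 2 * v ^+ 2 - (v + b) ^+ 2.
  have DK : D * (ln 2 - ln c) <= D * K by apply: ler_wpM2l => //; apply: ltW.
  have v0 : 0 <= v by lra.
  have bv : 4 * b * v <= (v - 1) * v by apply: ler_wpM2r => //; lra.
  have bb : 4 * b * b <= (v - 1) * b by apply: ler_wpM2r => //; lra.
  have vv : v <= v * v by apply: ler_peMl; lra.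
  lra.
rewrite -[2 in X in X < _]lnK ?posrE // -[c in X in _ < X]lnK ?posrE //.
rewrite -!expRD ltr_expR -subr_gt0.
have -> : ln c + - ((v + b) ^+ 2 / (2 * D)) - (ln 2 + - (v ^+ 2 / D)) =
          (2 * v ^+ 2 - (v + b) ^+ 2 - 2 * D * (ln 2 - ln c)) / (2 * D).
  by field; rewrite gt_eqF.
by rewrite divr_gt0 ?subr_gt0 ?mulr_gt0.
Qed.

Section Behrend.

Variables (C : R) (Q : nat).
Hypothesis hC : 0 < C.
Hypothesis hQ : forall q : nat, (Q <= q)%N ->
  exists S : {set 'I_q},
    q%:R / expR (C * Num.sqrt (ln (q%:R : R))) < #|S|%:R /\ no3AP S.

Lemma rlim_le_behrend n (rho : R) : (Q <= n)%N -> (0 < n)%N -> 0 < rho ->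
  C * Num.sqrt (ln n%:R) <= - ln (8 * rho) -> rlim rho <= n%:R^-1.
Proof.
move=> Qn n0 rho0 hsqrt; have [S [hS no3]] := hQ Qn.
apply: rlim_le_inv n0 no3 (ltW rho0) (le_trans _ (ltW hS)).
have rho8 : 0 < 8 * rho by rewrite mulr_gt0.
have hexp : expR (C * Num.sqrt (ln n%:R)) <= (8 * rho)^-1.
  by rewrite -[X in _ <= X]lnK ?posrE ?invr_gt0 // lnV ?posrE // ler_expR.
rewrite ler_pdivlMr ?expR_gt0 //; apply: le_trans (ler_wpM2l _ hexp) _.
  by rewrite mulr_ge0 ?(ltW rho0).
by rewrite natrM mulrA [rho * 8]mulrC mulrAC mulfV ?gt_eqF // mul1r.
Qed.

Lemma rlim_le_expR_sqr (rho v : R) : 0 < rho -> ln (8 * rho) = - v ->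
  1 <= v -> C ^+ 2 * Q.+1%:R <= v -> rlim rho <= 2 * expR (- (v ^+ 2 / C ^+ 2)).
Proof.
move=> rho0 ev v1 vQ; have C2 : 0 < C ^+ 2 by rewrite exprn_gt0.
set Y := expR (v ^+ 2 / C ^+ 2); set n := Num.truncn Y.
have QY : Q.+2%:R <= Y.
  apply: le_trans (expR_ge1Dx _); rewrite -addn1 natrD addrC lerD2l.
  by rewrite ler_pdivlMr // mulrC (le_trans vQ) // expr2 ler_peMl // (le_trans ler01).
have Qn : (Q.+1 < n)%N by rewrite truncn_gt_nat.
have nY : n%:R <= Y by rewrite truncn_le expR_ge0.
have Yn : Y <= 2 * n%:R.
  by apply/ltW/(lt_le_trans (truncnS_gt Y)); rewrite -/n -natrM ler_nat; lia.
have n0 : 0 < n%:R :> R by rewrite ltr0n; lia.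
have sqrt_ln_n : C * Num.sqrt (ln n%:R) <= v.
  have vC : 0 <= v / C by rewrite divr_ge0 ?(ltW hC) //; lra.
  rewrite -ler_pdivlMl // mulrC -(ger0_norm vC) -sqrtr_sqr.
  rewrite ler_sqrt ?sqr_ge0 // expr_div_n -[X in _ <= X]expRK.
  by rewrite ler_ln ?posrE ?expR_gt0.
apply: le_trans (rlim_le_behrend (n := n) _ _ rho0 _) _; [lia | lia | by rewrite ev opprK |].
by rewrite expRN -/Y ler_pdivlMr ?expR_gt0 // mulrC ler_pdivrMr.
Qed.

Lemma rlim_small (c : R) : 0 < c -> exists2 eps : R, 0 < eps &
  forall rho, 0 < rho < eps -> rlim rho < c * expR (- (ln rho ^+ 2 / (2 * C ^+ 2))).
Proof.
move=> c0; have C2 : 0 < C ^+ 2 by rewrite exprn_gt0.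
have b0 : 0 < ln (8 : R) by rewrite ln_gt0 // ltr1n.
have Kk := ler_norm (ln 2 - ln c); have k0 := normr_ge0 (ln 2 - ln c).
move: `|_| Kk k0 => k Kk k0.
have Q0 : 0 <= Q.+1%:R :> R := ler0n _ _.
have V0 : 0 <= 8 * C ^+ 2 * k /\ 0 <= C ^+ 2 * Q.+1%:R by split; nra.
(* One summand for each lower bound on v used below. *)
pose V := 4 * ln 8 + 1 + 8 * C ^+ 2 * k + C ^+ 2 * Q.+1%:R.
exists (expR (- V) / 8) => [|rho /andP[rho0 rhoV]]; first by rewrite divr_gt0 ?expR_gt0.
have rho8 : 0 < 8 * rho by rewrite mulr_gt0.
have [v ev] : {v | ln (8 * rho) = - v} by exists (- ln (8 * rho)); rewrite opprK.
have Vv : V < v.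
  by rewrite -[v]opprK -ev ltrNr -ltr_expR lnK ?posrE // mulrC -ltr_pdivlMr.
have lnrho : ln rho = - (v + ln 8) by move: ev; rewrite lnM ?posrE //; lra.
rewrite /V in Vv.
apply: le_lt_trans (rlim_le_expR_sqr rho0 ev _ _) _; [lra | lra |].
by rewrite lnrho sqrrN (expR_sqr_gap _ _ _ Kk) //; lra.
Qed.

End Behrend.

End Density.

Lemma ratio_lower_bound (R : realType) (u e : nat -> R) N :
  (forall k, 0 <= u k) ->
  (forall k, (N <= k)%N -> expR (e k - e k.+1) <= u k.+1 / u k) ->
  exists2 c, 0 < c & forall k, (N <= k)%N -> c * expR (- e k) <= u k.
Proof.
move=> u0 hu.
have upos k : (N <= k)%N -> 0 < u k.
  (* u k = 0 would make the ratio u k.+1 / u k equal to 0. *)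
  move=> Nk; rewrite lt_neqAle u0 andbT; apply/eqP => uk0.
  by have := hu k Nk; rewrite -uk0 invr0 mulr0 leNgt expR_gt0.
pose g k := u k * expR (e k).
have g_nondecr d : g N <= g (N + d)%N.
  elim: d => [|d IH]; first by rewrite addn0.
  apply: le_trans IH _; rewrite addnS /g; set k := (N + d)%N.
  have := hu k (leq_addr _ _); rewrite ler_pdivlMr ?upos ?leq_addr // => h.
  rewrite -[e k](subrK (e k.+1)) expRD mulrA [u k * _]mulrC.
  by rewrite ler_wpM2r ?expR_ge0.
exists (g N) => [|k Nk]; first by rewrite mulr_gt0 ?upos ?expR_gt0.
have := g_nondecr (k - N)%N; rewrite subnKC // /g => h.
apply: le_trans (ler_wpM2r (expR_ge0 (- e k)) h) _.
by rewrite -mulrA -expRD subrr expR0 mulr1.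
Qed.

Local Open Scope classical_set_scope.
Local Open Scope ring_scope.

Theorem lemma3 (R : realType) (C : R) (hC : 0 < C)
  (hBehrend : exists Q : nat, forall q : nat, (Q <= q)%N ->
      exists S : {set 'I_q},
        q%:R / expR (C * Num.sqrt (ln (q%:R : R))) < (#|S|)%:R /\ no3AP S)
  (x : nat -> R) (hx : forall k, 0 < x k <= 1) (hx0 : x @ \oo --> 0) :
  forall N : nat, exists k : nat, (N <= k)%N /\
    rlim (x k.+1) / rlim (x k)
      < expR (- (1 / (2 * C ^+ 2)) * (ln (x k.+1) ^+ 2 - ln (x k) ^+ 2)).
Proof.
move=> N; have [Q hQ] := hBehrend; apply: contrapT => hno.
pose e k := ln (x k) ^+ 2 / (2 * C ^+ 2).
have hratio k : (N <= k)%N -> expR (e k - e k.+1) <= rlim (x k.+1) / rlim (x k).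
  move=> Nk; rewrite leNgt; apply/negP => hlt; apply: hno; exists k; split => //.
  by congr (_ < expR _): hlt; rewrite /e; field; rewrite gt_eqF ?mulr_gt0 ?exprn_gt0.
have [c c0 hlow] := ratio_lower_bound (fun k => rlim_ge0 (x k)) hratio.
have [eps eps0 hsmall] := rlim_small hC hQ c0.
have [n _ hn] := (cvgrPdist_lt _ _).1 hx0 eps eps0.
have [k [Nk xk]] : exists k, (N <= k)%N /\ x k < eps.
  exists (maxn N n); split; first exact: leq_maxl.
  have := hn (maxn N n) (leq_maxr N n); rewrite /= sub0r normrN ger0_norm //.
  by case/andP: (hx (maxn N n)) => /ltW.
have xk0 : 0 < x k < eps by case/andP: (hx k) => -> _.
by have := lt_le_trans (hsmall _ xk0) (hlow k Nk); rewrite ltxx.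
Qed.
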